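(* Let $\lambda=(\lambda_1\ge\lambda_2\ge\cdots\ge\lambda_n\ge0)$ be integers and $a_k=\lambda_k-\lambda_{k+1}$ ($1\le k\le n$, $\lambda_{n+1}=0$). The linear map $\phi$ sending an $n\times n$ integer matrix $(a_{ij})$ to the array $(\lambda_{ij})_{i+j\le n+1}$ with $\lambda_{ij}=\sum_{l=j}^{n+1-i}a_{il}$ restricts to a bijection from $\Upsilon_\lambda$ onto $\Pi_\lambda$. In particular, $\phi$ identifies $\mathrm{conv}(\Upsilon_\lambda)$ with the Gel'fand–Cetlin polytope $P_\lambda$.
   Context: For $I=\{i_1<\cdots<i_k\}\subseteq\{1,\ldots,n\}$, $\alpha_I\in\mathbb{Z}^{n\times n}$ is the exponent matrix of the antidiagonal monomial $\prod_{r=1}^kz_{r,i_{k+1-r}}$ of the minor of the generic matrix $(z_{ij})$ with rows $1,\ldots,k$ and columns $I$ (so $\alpha_I$ has entry $1$ at positions $(r,i_{k+1-r})$, $r=1,\ldots,k$, and $0$ elsewhere). $\Upsilon_\lambda$ is the set of all matrices $\sum_{s}\alpha_{I_s}$, where $(I_s)_s$ is a finite list of nonempty subsets of $\{1,\ldots,n\}$ containing exactly $a_k$ subsets of size $k$ for each $k$. A Gel'fand–Cetlin pattern for $\lambda$ is a real array $(\lambda_{i,j})_{i,j\ge1,\,i+j\le n+1}$ with $\lambda_{i,1}=\lambda_i$ for all $i$ and $\lambda_{i,j}\ge\lambda_{i,j+1}\ge\lambda_{i+1,j}$ whenever these entries are defined. $\Pi_\lambda$ is the set of integer Gel'fand–Cetlin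 patterns for $\lambda$, and the Gel'fand–Cetlin polytope is $P_\lambda=\mathrm{conv}(\Pi_\lambda)$. *)

From HB Require Import structures.
From mathcomp Require Import all_boot all_order all_algebra.
Set Implicit Arguments. Unset Strict Implicit. Unset Printing Implicit Defensive.
Import Order.TTheory GRing.Theory Num.Theory.
Local Open Scope ring_scope.

(* Conventions: indices are 0-based ('I_n), so row/column r+1 of the paper is
   r here.  Arrays (lambda_{ij})_{i+j<=n+1} are encoded as n x n matrices whose
   entries outside the triangle {(i,j) | i + j < n} (0-based) are 0. *)

(* lam i = lambda_{i+1}; lam_next i = lambda_{i+2}, with lambda_{n+1} = 0 *)
Definition lam_next (n : nat) (R : numDomainType) (lam : 'I_n -> R) (i : 'I_n) : R :=
  if (i.+1 < n)%N then lam (insubd i i.+1) else 0.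

Definition acoef (n : nat) (lam : 'I_n -> int) (k : 'I_n) : nat :=
  absz (lam k - lam_next lam k).

(* the increasing enumeration i_1 < ... < i_k of I (as naturals, 0-based) *)
Definition sorted_elems (n : nat) (I : {set 'I_n}) : seq nat :=
  [seq val i | i <- enum 'I_n & i \in I].

(* alpha_I : entry 1 at positions (r, i_{k+1-r}), r = 1..k (1-based) *)
Definition alpha (n : nat) (I : {set 'I_n}) : 'M[int]_n :=
  \matrix_(r < n, c < n)
    (if (r < #|I|)%N && ((c : nat) == nth 0%N (sorted_elems I) (#|I|.-1 - r))
     then 1 else 0).

Definition Upsilon (n : nat) (lam : 'I_n -> int) (A : 'M[int]_n) : Prop :=
  exists Is : seq {set 'I_n},
    all (fun I : {set 'I_n} => I != set0) Is /\
    (forall k : 'I_n, count (fun I : {set 'I_n} => #|I| == k.+1) Is = acoef lam k) /\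
    A = \sum_(I <- Is) alpha I.

Definition phi (R : pzRingType) (n : nat) (A : 'M[R]_n) : 'M[R]_n :=
  \matrix_(i < n, j < n)
    (if (i + j < n)%N then \sum_(l < n | (j <= l)%N && (l <= n.-1 - i)%N) A i l
     else 0).

Definition GC_pattern (R : realDomainType) (n : nat) (lam : 'I_n -> R)
    (P : 'M[R]_n) : Prop :=
  (forall i j : 'I_n, (n <= i + j)%N -> P i j = 0) /\
  (forall i : 'I_n, forall j0 : 'I_n, (j0 : nat) = 0%N -> P i j0 = lam i) /\
  (forall i j : 'I_n, (i + j.+1 < n)%N ->
     P i (insubd j j.+1) <= P i j /\ P (insubd i i.+1) j <= P i (insubd j j.+1)).

Definition Pi (n : nat) (lam : 'I_n -> int) (P : 'M[int]_n) : Prop :=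
  GC_pattern lam P.

Definition conv (R : realFieldType) (n : nat) (S : 'M[R]_n -> Prop)
    (x : 'M[R]_n) : Prop :=
  exists (m : nat) (w : 'I_m -> R) (p : 'I_m -> 'M[R]_n),
    (forall t, 0 <= w t) /\ \sum_t w t = 1 /\ (forall t, S (p t)) /\
    x = \sum_t w t *: p t.

Definition intmx_set (R : realFieldType) (n : nat) (S : 'M[int]_n -> Prop)
    (x : 'M[R]_n) : Prop :=
  exists A, S A /\ x = map_mx (fun z : int => z%:~R) A.

From HB Require Import structures.
From mathcomp Require Import all_boot all_order all_algebra zify.
Import Order.TTheory GRing.Theory Num.Theory.
Set Implicit Arguments. Unset Strict Implicit. Unset Printing Implicit Defensive.
Local Open Scope ring_scope.

(* The entry (r, j) of phi(alpha_I) is 1 if r < #{i in I | i >= j} and 0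
   otherwise, so for A = sum_s alpha_{I_s} the entry phi(A)_{rj} counts the sets
   I_s having more than r elements >= j.  The Gel'fand-Cetlin inequalities say
   that these counts decrease in j by steps of at most one, and the first
   column telescopes to lambda.  Conversely a pattern P is sliced into levels:
   for 1 <= t <= lambda_1, the number M_t(j) of rows whose entry in column j is
   at least t is such a count for the set I_t of columns at which M_t drops, and
   P = phi(sum_t alpha_{I_t}).  Injectivity holds because a matrix vanishing
   below the antidiagonal is recovered from its partial row sums, and the
   statements on convex hulls follow by linearity. *)

Lemma count_iota1_leq b L : (b <= L)%N -> count (fun t => t <= b)%N (iota 1 L) = b.
Proof.
move=> bL; rewrite -size_filter (@eq_filter _ _ (fun t => t < 1 + b)%N) //.
by rewrite filter_iota_ltn // size_iota.
Qed.

Lemma count_iota1_itv a b L : (a <= b <= L)%N ->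
  count (fun t => a < t <= b)%N (iota 1 L) = (b - a)%N.
Proof.
move=> /andP[ab bL].
have := count_predUI (fun t => t <= a)%N (fun t => a < t <= b)%N (iota 1 L).
rewrite (@eq_count _ (predU _ _) (fun t => t <= b)%N); last by move=> t /=; lia.
rewrite (@eq_count _ (predI _ _) pred0); last by move=> t /=; lia.
rewrite count_pred0 addn0 !count_iota1_leq //; [lia | exact: leq_trans bL].
Qed.

Lemma downward_closed_count (q : pred nat) n :
  (forall r, q r.+1 -> q r) -> (forall r, (n <= r)%N -> ~~ q r) ->
  forall r, q r = (r < count q (iota 0 n))%N.
Proof.
move=> qS qn r; have q_le s t : (s <= t)%N -> q t -> q s.
  by move=> /subnK <-; elim: (t - s)%N => // d IH /qS.
case: (ltnP r n) => [rn | nr]; last first.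
  by rewrite (negbTE (qn r nr)) ltnNge (leq_trans (count_size _ _)) ?size_iota.
rewrite -(subnKC (ltnW rn)) iotaD count_cat add0n.
case qr: (q r).
  have -> : count q (iota 0 r) = r.
    rewrite -[RHS](size_iota 0 r); apply/eqP; rewrite -all_count.
    by apply/allP => s; rewrite mem_iota => /andP[_ sr]; apply: q_le qr; lia.
  by rewrite -(subnSK rn) /= qr; lia.
have -> : count q (iota r (n - r)) = 0%N.
  rewrite (@eq_in_count _ _ pred0) ?count_pred0 // => s; rewrite mem_iota.
  by case/andP => rs _; apply/negbTE/negP => /(q_le r s rs); rewrite qr.
by rewrite addn0 ltnNge -{2}(size_iota 0 r) count_size.
Qed.

Lemma count_descents (M : nat -> nat) :
  (forall j, M j.+1 <= M j <= (M j.+1).+1)%N ->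
  forall len j, M (j + len)%N = 0%N ->
  count (fun x => M x.+1 < M x)%N (iota j len) = M j.
Proof.
move=> M_step; elim=> [|len IH] j; first by rewrite addn0.
by rewrite -addSnnS /= => /IH ->; have := M_step j; case: ltnP => /=; lia.
Qed.

Lemma sorted_ltn_nth_bound n s m :
  sorted ltn s -> all (fun y => y < n)%N s -> (m < size s)%N ->
  (nth 0%N s m + (size s - m) <= n)%N.
Proof.
elim: s m => [|x s IH] m //= s_sorted /andP[xn s_lt] ms.
case: m ms => [|m] ms /=; last by rewrite subSS IH // (path_sorted s_sorted).
case: s IH s_sorted s_lt {ms} => [|y s] IH /=; first by rewrite addn1.
move=> /andP[xy ys] /andP[yn s_lt]; have /= := IH 0%N ys.
by rewrite yn s_lt subn0 => /(_ isT isT); lia.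
Qed.

Lemma leq_nth_count j s m : sorted leq s -> (m < size s)%N ->
  (j <= nth 0%N s m)%N = (size s <= m + count (leq j) s)%N.
Proof.
elim: s m => [|x s IH] m //= s_sorted ms.
have x_min : all (leq x) s := order_path_min leq_trans s_sorted.
have := count_size (leq j) s; case: (leqP j x) => jx cs.
  have -> : count (leq j) s = size s.
    by apply/eqP; rewrite -all_count; apply/allP => y /(allP x_min); lia.
  case: m ms => [|m] ms /=; first by apply/idP/idP; lia.
  have := allP x_min _ (mem_nth 0%N (ms : (m < size s)%N)).
  by move=> /= x_nth; apply/idP/idP; lia.
case: m ms => [|m] ms /=; first by apply/idP/idP; lia.
by rewrite IH ?(path_sorted s_sorted).
Qed.

Section Extension.
Variables (T : Type) (x0 : T) (n : nat) (f : 'I_n -> T).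

Definition extn (m : nat) : T := if insub m is Some i then f i else x0.

Lemma extn_ord (i : 'I_n) : extn i = f i.
Proof. by rewrite /extn valK. Qed.

Lemma extn_out m : (n <= m)%N -> extn m = x0.
Proof. by move=> nm; rewrite /extn insubN // -leqNgt. Qed.

Lemma extn_insubd (i : 'I_n) m : (m < n)%N -> extn m = f (insubd i m).
Proof. by move=> mn; rewrite -extn_ord val_insubd mn. Qed.

End Extension.

Definition mx_extn (R : nmodType) n (A : 'M[R]_n) (r c : nat) : R :=
  extn 0 (fun i => extn 0 (A i) c) r.

Section MatrixExtension.
Variables (R : nmodType) (n : nat) (A : 'M[R]_n).

Lemma mx_extnE (i j : 'I_n) : mx_extn A i j = A i j.
Proof. by rewrite /mx_extn !extn_ord. Qed.

Lemma mx_extn_insubd (i j : 'I_n) r c : (r < n)%N -> (c < n)%N ->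
  mx_extn A r c = A (insubd i r) (insubd j c).
Proof. by move=> rn cn; rewrite /mx_extn (extn_insubd _ _ i) // (extn_insubd _ _ j). Qed.

Lemma mx_extn_out r c : (n <= r)%N || (n <= c)%N -> mx_extn A r c = 0.
Proof.
rewrite /mx_extn; case/orP => [nr | nc]; first by rewrite extn_out.
by rewrite {1}/extn; case: insubP => [i _ _|_] //; rewrite extn_out.
Qed.

End MatrixExtension.

Section SortedElems.
Variable n : nat.
Implicit Type I : {set 'I_n}.

Lemma size_sorted_elems I : size (sorted_elems I) = #|I|.
Proof.
rewrite /sorted_elems size_map size_filter cardE -size_filter /enum_mem.
by rewrite -filter_predI; congr size; apply: eq_filter => x /=; rewrite andbT.
Qed.

Lemma sorted_elems_ltn_sorted I : sorted ltn (sorted_elems I).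
Proof.
apply: (subseq_sorted ltn_trans _ (iota_ltn_sorted 0 n)).
by rewrite -val_enum_ord; apply/map_subseq/filter_subseq.
Qed.

Lemma sorted_elems_ltn I : all (fun y => y < n)%N (sorted_elems I).
Proof. by apply/allP => _ /mapP[i _ ->]; apply: ltn_ord. Qed.

Definition count_ge I (j : nat) : nat := count (leq j) (sorted_elems I).

Lemma count_ge0 I : count_ge I 0 = #|I|.
Proof. by rewrite /count_ge -size_sorted_elems -count_predT. Qed.

Lemma count_geS I j : (count_ge I j.+1 <= count_ge I j)%N.
Proof. by apply: sub_count => x /ltnW. Qed.

Lemma count_ge_leS I j : (count_ge I j <= (count_ge I j.+1).+1)%N.
Proof.
have := count_predUI (leq j.+1) (pred1 j) (sorted_elems I).
rewrite (@eq_count _ (predU _ _) (leq j)); last first.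
  by move=> x /=; rewrite orbC eq_sym -leq_eqVlt.
rewrite (@eq_count _ (predI _ _) pred0); last first.
  by move=> x /=; apply/negP => /andP[jx /eqP xj]; rewrite xj ltnn in jx.
rewrite count_pred0 addn0 /count_ge => ->.
rewrite count_uniq_mem ?(sorted_uniq ltn_trans ltnn (sorted_elems_ltn_sorted I)) //.
by case: (_ \in _); rewrite ?addn1 ?addn0.
Qed.

End SortedElems.

Section PhiLinear.
Variables (R : pzRingType) (n : nat).

Fact phi_is_linear : linear (@phi R n).
Proof.
move=> a A B; apply/matrixP => i j; rewrite !mxE.
case: ifP => _; last by rewrite mulr0 addr0.
by rewrite mulr_sumr -big_split; apply: eq_bigr => l _; rewrite !mxE.
Qed.

HB.instance Definition _ :=
  GRing.isLinear.Build R 'M[R]_n 'M[R]_n _ (@phi R n) phi_is_linear.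

Definition antitriangular (A : 'M[R]_n) : Prop :=
  forall i j : 'I_n, (n <= i + j)%N -> A i j = 0.

Lemma antitriangular_phi_eq0 (C : 'M[R]_n) :
  antitriangular C -> phi C = 0 -> C = 0.
Proof.
move=> C_tri phiC0; apply/matrixP => i j; rewrite [RHS]mxE.
pose tail k := \sum_(l < n | (k <= l)%N) C i l.
have tail0 k : tail k = 0.
  case: (ltnP (i + k) n) => ik; last first.
    by rewrite /tail big1 // => l kl; rewrite C_tri //; lia.
  have kn : (k < n)%N by lia.
  have : phi C i (Ordinal kn) = 0 by rewrite phiC0 mxE.
  rewrite mxE /= ik => <-; rewrite /tail big_mkcond [RHS]big_mkcond.
  apply: eq_bigr => l _; case: (leqP k l) => kl //=.
  by case: (leqP l (n.-1 - i)) => ln //=; rewrite C_tri //; lia.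
have := tail0 j; rewrite /tail (bigD1 j) //=.
rewrite (eq_bigl (fun l : 'I_n => (j.+1 <= l)%N)); last first.
  by move=> l /=; rewrite ltn_neqAle andbC eq_sym.
by have := tail0 j.+1; rewrite /tail => ->; rewrite addr0.
Qed.

Lemma phi_inj (A B : 'M[R]_n) :
  antitriangular A -> antitriangular B -> phi A = phi B -> A = B.
Proof.
move=> A_tri B_tri eq_phi; apply/eqP; rewrite -subr_eq0; apply/eqP.
apply: antitriangular_phi_eq0; last by rewrite linearB /= eq_phi subrr.
by move=> i j ij; rewrite !mxE A_tri // B_tri // subr0.
Qed.

End PhiLinear.

Lemma phi_map_int (R : pzRingType) n (A : 'M[int]_n) :
  phi (map_mx (fun z : int => z%:~R : R) A) = map_mx (fun z => z%:~R) (phi A).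
Proof.
apply/matrixP => i j; rewrite !mxE; case: ifP => _; last by rewrite mulr0z.
rewrite (big_morph (fun z : int => z%:~R : R) (@intrD R) (mulr0z 1)).
by apply: eq_bigr => l _; rewrite mxE.
Qed.

Lemma sum_indicator (R : pzSemiRingType) n (P : pred nat) c : (c < n)%N ->
  \sum_(l < n | P l) (if val l == c then 1 else 0 : R) = if P c then 1 else 0.
Proof.
move=> cn; rewrite big_mkcond (bigD1 (Ordinal cn)) //= eqxx big1 ?addr0 //.
move=> l /eqP l_c; case: ifP => // _; case: eqP => // lc.
by case: l_c; apply: val_inj.
Qed.

Section Alpha.
Variables (n : nat) (I : {set 'I_n}).

(* Row r of alpha_I has its only 1 in column i_{k-r}, which is at most n-1-r
   because r larger elements of I follow it; so the sum defining phi only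
   tests whether i_{k-r} >= j. *)
Lemma phi_alpha (r j : 'I_n) : (r + j < n)%N ->
  phi (alpha I) r j = if (r < count_ge I j)%N then 1 else 0.
Proof.
move=> rj; rewrite mxE rj; under eq_bigr => l _ do rewrite mxE.
have s_size := size_sorted_elems I; have s_sorted := sorted_elems_ltn_sorted I.
have s_lt := sorted_elems_ltn I.
rewrite /count_ge; set s := sorted_elems I in s_size s_sorted s_lt *.
case: (ltnP r #|I|) => [rI | Ir]; last first.
  by rewrite big1 // ltnNge (leq_trans (count_size _ _)) // s_size.
set m := (#|I|.-1 - r)%N; have ms : (m < size s)%N by rewrite s_size /m; lia.
have c_bound := sorted_ltn_nth_bound s_sorted s_lt ms.
have c_count := leq_nth_count j (sub_sorted (@ltnW) s_sorted) ms.
rewrite (sum_indicator _ (fun l => j <= l <= n.-1 - r)%N); last by lia.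
rewrite c_count (_ : (nth _ _ _ <= _)%N) ?andbT; last by lia.
by congr (if _ then _ else _); apply/idP/idP; lia.
Qed.

Lemma alpha_antitriangular : antitriangular (alpha I).
Proof.
move=> r c rc; rewrite mxE; case: ifP => // /andP[rI /eqP c_nth]; exfalso.
have ms : (#|I|.-1 - r < size (sorted_elems I))%N by rewrite size_sorted_elems; lia.
have := sorted_ltn_nth_bound (sorted_elems_ltn_sorted I) (sorted_elems_ltn I) ms.
by rewrite -c_nth size_sorted_elems; lia.
Qed.

End Alpha.

Lemma phi_sum_alpha n (Is : seq {set 'I_n}) (r j : 'I_n) : (r + j < n)%N ->
  phi (\sum_(I <- Is) alpha I) r j = (count (fun I => r < count_ge I j) Is)%N%:Z.
Proof.
move=> rj; rewrite linear_sum summxE.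
elim: Is => [|I Is IH]; first by rewrite big_nil.
by rewrite big_cons IH phi_alpha //= PoszD; case: ifP.
Qed.

Lemma Upsilon_antitriangular n (lam : 'I_n -> int) A :
  Upsilon lam A -> antitriangular A.
Proof.
case=> Is [_ [_ ->]] i j ij; rewrite summxE big1_seq // => I _.
exact: alpha_antitriangular.
Qed.

Record gc_array (n : nat) (p : nat -> nat -> int) : Prop := GcArray {
  gc_array_out {r j} : (n <= r + j)%N -> p r j = 0;
  gc_array_col0_ge0 r : 0 <= p r 0;
  gc_array_row {r j} : (r + j.+1 < n)%N -> p r j.+1 <= p r j;
  gc_array_interlace {r j} : (r + j.+1 < n)%N -> p r.+1 j <= p r j.+1 }.

Section LevelSets.
Variables (n : nat) (p : nat -> nat -> int).
Hypothesis p_gc : gc_array n p.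

Lemma gc_array_ge0 r j : 0 <= p r j.
Proof.
elim: j r => [|j IH] r; first exact: gc_array_col0_ge0 p_gc r.
case: (ltnP (r + j.+1) n) => rj; last by rewrite (gc_array_out p_gc).
exact: le_trans (IH r.+1) (gc_array_interlace p_gc rj).
Qed.

Lemma gc_array_rowW r j : p r j.+1 <= p r j.
Proof.
case: (ltnP (r + j.+1) n) => rj; first exact (gc_array_row p_gc rj).
by rewrite (gc_array_out p_gc rj) gc_array_ge0.
Qed.

Lemma gc_array_interlaceW r j : p r.+1 j <= p r j.+1.
Proof.
case: (ltnP (r + j.+1) n) => rj; first exact (gc_array_interlace p_gc rj).
by rewrite (gc_array_out p_gc (r := r.+1)) ?gc_array_ge0 //; lia.
Qed.

Lemma gc_array_col r j : p r.+1 j <= p r j.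
Proof. exact: le_trans (gc_array_interlaceW r j) (gc_array_rowW r j). Qed.

Lemma gc_array_le00 r j : p r j <= p 0 0.
Proof.
elim: r => [|r IH]; last exact: le_trans (gc_array_col r j) IH.
by elim: j => // j IH; exact: le_trans (gc_array_rowW 0 j) IH.
Qed.

Section Level.
Variable t : nat.
Hypothesis t_gt0 : (0 < t)%N.

Definition level_count (j : nat) : nat :=
  count (fun r => t%:Z <= p r j) (iota 0 n).

Lemma level_countE j r : (t%:Z <= p r j) = (r < level_count j)%N.
Proof.
apply: downward_closed_count => [s | s ns].
  by move/le_trans; apply; apply: gc_array_col.
by rewrite (gc_array_out p_gc) ?lez_nat -?ltnNge //; lia.
Qed.

Lemma level_count_step j :
  (level_count j.+1 <= level_count j <= (level_count j.+1).+1)%N.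
Proof.
apply/andP; split.
  by apply: sub_count => r /= /le_trans; apply; apply: gc_array_rowW.
rewrite leqNgt; apply/negP => lt_m.
have : (level_count j.+1 < level_count j.+1)%N.
  rewrite -level_countE; apply: (le_trans _ (gc_array_interlaceW _ j)).
  by rewrite level_countE.
by rewrite ltnn.
Qed.

Lemma level_count_out j : (n <= j)%N -> level_count j = 0%N.
Proof.
move=> nj; apply/eqP; rewrite -leqn0 leqNgt -level_countE.
by rewrite (gc_array_out p_gc) ?lez_nat -?ltnNge.
Qed.

Definition level_set : {set 'I_n} :=
  [set x : 'I_n | (level_count x.+1 < level_count x)%N].

Lemma count_ge_level_set j : (j <= n)%N -> count_ge level_set j = level_count j.
Proof.
move=> jn; rewrite /count_ge /sorted_elems count_map count_filter.
pose descent x := (j <= x)%N && (level_count x.+1 < level_count x)%N.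
rewrite (eq_count (a2 := descent \o val)); last by move=> x /=; rewrite inE.
rewrite -count_map val_enum_ord -(subnKC jn) iotaD count_cat add0n.
rewrite (@eq_in_count _ _ pred0 (iota 0 j)) ?count_pred0; last first.
  by move=> x; rewrite mem_iota => /andP[_ xj]; rewrite /descent leqNgt xj.
rewrite (@eq_in_count _ _ (fun x => level_count x.+1 < level_count x)%N); last first.
  by move=> x; rewrite mem_iota => /andP[jx _]; rewrite /descent jx.
by apply: count_descents; [exact: level_count_step | rewrite subnKC // level_count_out].
Qed.

Lemma card_level_set : #|level_set| = level_count 0.
Proof. by rewrite -count_ge0 count_ge_level_set. Qed.

Lemma level_set_neq0 : t%:Z <= p 0 0 -> level_set != set0.
Proof. by rewrite -card_gt0 card_level_set level_countE. Qed.

End Level.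

Lemma count_card_level_set k :
  (count (fun t => #|level_set t| == k.+1) (iota 1 `|p 0 0|))%:Z = p k 0 - p k.+1 0.
Proof.
have abs_p r j : `|p r j|%N%:Z = p r j := gez0_abs (gc_array_ge0 r j).
rewrite (@eq_in_count _ _ (fun t => `|p k.+1 0| < t <= `|p k 0|)%N); last first.
  move=> t; rewrite mem_iota => /andP[t_gt0 _] /=.
  rewrite card_level_set // eqn_leq [(_ <= k.+1)%N]leqNgt andbC -!level_countE //.
  by rewrite -ltz_nat -lez_nat !abs_p -ltNge andbC.
rewrite count_iota1_itv; last by rewrite -!lez_nat !abs_p gc_array_col gc_array_le00.
by rewrite -subzn ?abs_p // -lez_nat !abs_p gc_array_col.
Qed.

Lemma phi_sum_level_sets (i j : 'I_n) :
  phi (\sum_(t <- iota 1 `|p 0 0|) alpha (level_set t)) i j = p i j.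
Proof.
have abs_p r j' : `|p r j'|%N%:Z = p r j' := gez0_abs (gc_array_ge0 r j').
case: (ltnP (i + j) n) => ij.
  2: by rewrite mxE ltnNge ij /= (gc_array_out p_gc ij).
rewrite -(big_map level_set xpredT) phi_sum_alpha // count_map.
rewrite (@eq_in_count _ _ (fun t => t <= `|p i j|)%N); last first.
  move=> t; rewrite mem_iota => /andP[t_gt0 _] /=.
  rewrite count_ge_level_set ?(ltnW (ltn_ord j)) // -level_countE //.
  by rewrite -[p i j]abs_p lez_nat.
by rewrite count_iota1_leq ?abs_p // -lez_nat !abs_p gc_array_le00.
Qed.

End LevelSets.

Lemma lam_nextE n (lam : 'I_n -> int) (k : 'I_n) :
  lam_next lam k = extn 0 lam k.+1.
Proof.
rewrite /lam_next; case: ifP => [kn | /negbT]; first by rewrite (extn_insubd _ _ k).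
by rewrite -leqNgt => nk; rewrite extn_out.
Qed.

Section GelfandCetlin.
Variables (n : nat) (lam : 'I_n -> int).
Hypothesis lam_nonincr : forall i j : 'I_n, (i <= j)%N -> lam j <= lam i.
Hypothesis lam_nonneg : forall i : 'I_n, 0 <= lam i.

Lemma acoefE (k : 'I_n) : (acoef lam k)%:Z = lam k - extn 0 lam k.+1.
Proof.
rewrite /acoef lam_nextE gez0_abs // subr_ge0.
case: (ltnP k.+1 n) => kn; last by rewrite extn_out.
by rewrite (extn_insubd _ _ k) // lam_nonincr // val_insubd kn.
Qed.

Lemma count_card_gt (Is : seq {set 'I_n}) :
  (forall k : 'I_n, count (fun I : {set 'I_n} => #|I| == k.+1) Is = acoef lam k) ->
  forall m, (count (fun I : {set 'I_n} => m < #|I|)%N Is)%:Z = extn 0 lam m.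
Proof.
move=> cnt m; have [d] := ubnP (n - m); elim: d m => // d IH m.
case: (ltnP m n) => [mn | nm] nmd; last first.
  rewrite extn_out // (@eq_count _ _ pred0) ?count_pred0 // => I /=.
  by apply/negbTE; rewrite -leqNgt (leq_trans (max_card _)) // card_ord.
have := count_predUI (fun I : {set 'I_n} => (m.+1 < #|I|)%N) (fun I => #|I| == m.+1) Is.
rewrite (@eq_count _ (predU _ _) (fun I : {set 'I_n} => (m < #|I|)%N)); last first.
  by move=> I /=; rewrite orbC eq_sym -leq_eqVlt.
rewrite (@eq_count _ (predI _ _) pred0); last first.
  by move=> I /=; apply/negP => /andP[lt /eqP eq]; rewrite eq ltnn in lt.
rewrite count_pred0 addn0 => ->; rewrite PoszD IH; last lia.
rewrite (cnt (Ordinal mn)) acoefE addrC subrK.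
exact: esym (extn_ord 0 lam (Ordinal mn)).
Qed.

Lemma Pi_phi_Upsilon A : Upsilon lam A -> Pi lam (phi A).
Proof.
case=> Is [_ [cnt ->]]; split; [|split].
- by move=> i j ij; rewrite mxE ltnNge ij.
- move=> i j j0; rewrite phi_sum_alpha; last by rewrite j0 addn0.
  rewrite j0 (eq_count (a2 := fun I : {set 'I_n} => (i < #|I|)%N)) => [|I].
    by rewrite count_card_gt // extn_ord.
  by rewrite /= count_ge0.
- move=> i j ij.
  have j1 : val (insubd j j.+1) = j.+1 by rewrite val_insubd (_ : (j.+1 < n)%N) //; lia.
  have i1 : val (insubd i i.+1) = i.+1 by rewrite val_insubd (_ : (i.+1 < n)%N) //; lia.
  rewrite !phi_sum_alpha ?i1 ?j1 ?lez_nat; try lia.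
  split; apply: sub_count => I /=; first by move/leq_trans; apply; exact: count_geS.
  by have := count_ge_leS I j; lia.
Qed.

Lemma Pi_col0 P : Pi lam P -> forall r, mx_extn P r 0 = extn 0 lam r.
Proof.
case=> _ [col0 _] r; case: (ltnP r n) => rn; last by rewrite mx_extn_out ?rn // extn_out.
have n_gt0 : (0 < n)%N by lia.
rewrite (mx_extn_insubd P (Ordinal rn) (Ordinal n_gt0)) //.
by rewrite (extn_insubd _ _ (Ordinal rn)) // col0 // val_insubd n_gt0.
Qed.

Lemma Pi_gc_array P : Pi lam P -> gc_array n (mx_extn P).
Proof.
move=> PiP; have col0 := Pi_col0 PiP; case: PiP => out [_ inter]; split.
- move=> r j rj; case: (ltnP r n) => rn; last by rewrite mx_extn_out ?rn.
  case: (ltnP j n) => jn; last by rewrite mx_extn_out ?jn ?orbT.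
  change (mx_extn P (Ordinal rn) (Ordinal jn) = 0); rewrite mx_extnE; exact: out.
- move=> r; rewrite col0 /extn; case: insubP => // i _ _; exact: lam_nonneg.
- move=> r j rj; have [rn jn] : (r < n)%N /\ (j < n)%N by lia.
  have [row _] := inter (Ordinal rn) (Ordinal jn) rj.
  change (mx_extn P (Ordinal rn) (Ordinal jn).+1
          <= mx_extn P (Ordinal rn) (Ordinal jn)).
  by rewrite mx_extnE (mx_extn_insubd P (Ordinal rn) (Ordinal jn)) ?valKd //=; lia.
- move=> r j rj; have [rn jn] : (r < n)%N /\ (j < n)%N by lia.
  have [_ interlace] := inter (Ordinal rn) (Ordinal jn) rj.
  change (mx_extn P (Ordinal rn).+1 (Ordinal jn)
          <= mx_extn P (Ordinal rn) (Ordinal jn).+1).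
  by rewrite !(mx_extn_insubd P (Ordinal rn) (Ordinal jn)) ?valKd //=; lia.
Qed.

Lemma Upsilon_onto_Pi P : Pi lam P -> exists A, Upsilon lam A /\ phi A = P.
Proof.
move=> PiP; have p_gc := Pi_gc_array PiP; have col0 := Pi_col0 PiP.
set p := mx_extn P in p_gc col0; set L := `|p 0 0|%N.
exists (\sum_(t <- iota 1 L) alpha (level_set n p t)); split; last first.
  by apply/matrixP => i j; rewrite phi_sum_level_sets // /p mx_extnE.
exists [seq level_set n p t | t <- iota 1 L]; split; last split; last by rewrite big_map.
- apply/allP => _ /mapP[t + ->]; rewrite mem_iota => /andP[t_gt0 tL].
  apply: level_set_neq0 => //.
  by rewrite -(gez0_abs (gc_array_ge0 p_gc 0 0)) lez_nat; lia.
- move=> k; apply/eqP; rewrite -eqz_nat count_map count_card_level_set //.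
  by rewrite !col0 extn_ord acoefE.
Qed.

End GelfandCetlin.

Section ConvexHull.
Variables (R : realFieldType) (n : nat).
Implicit Types S T : 'M[int]_n -> Prop.

Lemma conv_phi S T : (forall A, S A -> T (phi A)) ->
  forall x, conv (intmx_set (R:=R) S) x -> conv (intmx_set (R:=R) T) (phi x).
Proof.
move=> ST x [m [w [q [w_ge0 [w_sum [qS ->]]]]]].
exists m, w, (fun t => phi (q t)); split=> //; split=> //; split.
  move=> t; have [A [SA ->]] := qS t.
  by exists (phi A); rewrite phi_map_int; split; first exact: ST.
by rewrite linear_sum; apply: eq_bigr => t _; rewrite linearZ.
Qed.

Lemma conv_phi_onto S T : (forall B, T B -> exists A, S A /\ phi A = B) ->
  forall y, conv (intmx_set (R:=R) T) y ->
  exists x, conv (intmx_set (R:=R) S) x /\ phi x = y.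
Proof.
move=> TS y [m [w [q [w_ge0 [w_sum [qT ->]]]]]].
have /fin_all_exists [A SA] t :
    exists A, S A /\ map_mx (fun z : int => z%:~R : R) (phi A) = q t.
  by have [B [TB ->]] := qT t; have [A [SA <-]] := TS B TB; exists A.
exists (\sum_t w t *: map_mx (fun z : int => z%:~R : R) (A t)); split.
  exists m, w, (fun t => map_mx (fun z : int => z%:~R : R) (A t)).
  do 3!split=> //; move=> t; exists (A t); split=> //; exact: (SA t).1.
by rewrite linear_sum; apply: eq_bigr => t _; rewrite linearZ /= phi_map_int (SA t).2.
Qed.

Lemma conv_antitriangular S : (forall A, S A -> antitriangular A) ->
  forall x, conv (intmx_set (R:=R) S) x -> antitriangular x.
Proof.
move=> S_tri x [m [w [q [_ [_ [qS ->]]]]]] i j ij.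
rewrite summxE big1 // => t _; have [A [SA ->]] := qS t.
by rewrite !mxE S_tri // mulr0z mulr0.
Qed.

End ConvexHull.

Theorem mainTheorem5 (n : nat) (lam : 'I_n -> int)
    (lam_nonincr : forall i j : 'I_n, (i <= j)%N -> lam j <= lam i)
    (lam_nonneg : forall i : 'I_n, 0 <= lam i) :
  (forall A, Upsilon lam A -> Pi lam (phi A)) /\
  (forall A B, Upsilon lam A -> Upsilon lam B -> phi A = phi B -> A = B) /\
  (forall P, Pi lam P -> exists A, Upsilon lam A /\ phi A = P) /\
  (forall R : realFieldType,
     (forall x : 'M[R]_n, conv (intmx_set (R:=R) (Upsilon lam)) x ->
        conv (intmx_set (R:=R) (Pi lam)) (phi x)) /\
     (forall y : 'M[R]_n, conv (intmx_set (R:=R) (Pi lam)) y ->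
        exists x, conv (intmx_set (R:=R) (Upsilon lam)) x /\ phi x = y) /\
     (forall x x' : 'M[R]_n, conv (intmx_set (R:=R) (Upsilon lam)) x ->
        conv (intmx_set (R:=R) (Upsilon lam)) x' -> phi x = phi x' -> x = x')).
Proof.
have into := Pi_phi_Upsilon lam_nonincr lam_nonneg.
have onto := Upsilon_onto_Pi lam_nonincr lam_nonneg.
have inj A B : Upsilon lam A -> Upsilon lam B -> phi A = phi B -> A = B.
  by move=> /Upsilon_antitriangular + /Upsilon_antitriangular; exact: phi_inj.
have conv_tri := conv_antitriangular (@Upsilon_antitriangular n lam).
do 3!split=> //; move=> R; split; first exact: conv_phi into.
split; first exact: conv_phi_onto onto.
by move=> x x' /conv_tri + /conv_tri; exact: phi_inj.
Qed.
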